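(* Let $q\geq 3$ be a prime power and let $k_1,k_2,l$ be non-negative integers such that $k_1=k_2=l+1\leq q-1$. Then there exists a linear $l$-intersection pair of two MDS codes over $\mathbb{F}_q$ both with parameters $[q,l+1,q-l]_q$.
   Context: An $[n,k,d]_q$ linear code is a $k$-dimensional subspace of $\mathbb{F}_q^n$ with minimum Hamming distance $d$; it is MDS if $d=n-k+1$. Two linear codes $C_1,C_2\subseteq\mathbb{F}_q^n$ form a linear $l$-intersection pair if $\dim(C_1\cap C_2)=l$. *)

From HB Require Import structures.
From mathcomp Require Import all_boot all_order all_algebra all_field.
Set Implicit Arguments. Unset Strict Implicit. Unset Printing Implicit Defensive.
Import GRing.Theory.
Local Open Scope ring_scope.

Definition hwt (F : fieldType) (n : nat) (x : 'rV[F]_n) : nat :=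
  #|[set i : 'I_n | x 0 i != 0]|.

Definition hdist (F : fieldType) (n : nat) (x y : 'rV[F]_n) : nat := hwt (x - y).

Definition min_dist (F : fieldType) (n : nat) (C : {vspace 'rV[F]_n}) (d : nat) : Prop :=
  (exists x, exists y, [/\ x \in C, y \in C, x != y & hdist x y = d]) /\
  (forall x y, x \in C -> y \in C -> x != y -> (d <= hdist x y)%N).

Definition is_code (F : fieldType) (n : nat) (C : {vspace 'rV[F]_n}) (k d : nat) : Prop :=
  \dim C = k /\ min_dist C d.

Definition is_MDS (F : fieldType) (n : nat) (C : {vspace 'rV[F]_n}) : Prop :=
  exists d, min_dist C d /\ d = (n - \dim C + 1)%N.

Definition l_intersection_pair (F : fieldType) (n : nat) (C1 C2 : {vspace 'rV[F]_n}) (l : nat) : Prop :=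
  \dim (C1 :&: C2) = l.

(* Both codes are generalized Reed-Solomon codes: evaluate the polynomials of
   degree at most l at all q points of F, for C1 with all weights 1 and for C2
   with weight lam (lam <> 0, 1) at the point 0.  A nonzero polynomial of degree
   at most l has at most l roots, so nonzero codewords have weight at least
   q - l, with equality for a product of l distinct linear factors: both codes
   are MDS.  A common codeword comes from p and g agreeing at the q - 1 nonzero
   points, so p = g since l < q - 1, and then p(0) = lam p(0) forces p(0) = 0.
   Hence the intersection is spanned by the evaluations of X, ..., X^l. *)

From HB Require Import structures.
From mathcomp Require Import all_boot all_order all_algebra all_field.
From mathcomp Require Import zify.
Set Implicit Arguments. Unset Strict Implicit. Unset Printing Implicit Defensive.
Import GRing.Theory.
Local Open Scope ring_scope.

Lemma exists_neq2 (T : finType) (a b : T) :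
  (2 < #|T|)%N -> exists x : T, (x != a) && (x != b).
Proof.
move=> T3; apply/existsP; apply: contraTT T3 => /existsPn ab; rewrite -leqNgt.
have sub_ab : [set: T] \subset [set a; b].
  by apply/subsetP => x _; have := ab x; rewrite !inE negb_and !negbK.
by rewrite -cardsT (leq_trans (subset_leq_card sub_ab)) // cards2; case: (a != b).
Qed.

Lemma hwt0 (F : fieldType) (n : nat) : hwt (0 : 'rV[F]_n) = 0%N.
Proof. by apply/eqP; rewrite cards_eq0; apply/eqP/setP => i; rewrite !inE mxE eqxx. Qed.

Section WeightedEvaluation.
Variable F : finFieldType.
Local Notation q := #|F|.
Implicit Types (w : F -> F) (p : {poly F}).

Definition weval w p : 'rV[F]_q := \row_i (w (enum_val i) * p.[enum_val i]).

Lemma weval_is_linear w : linear (weval w).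
Proof. by move=> a p r; apply/rowP => i; rewrite !mxE hornerD hornerZ mulrDr mulrCA. Qed.

HB.instance Definition _ w :=
  GRing.isLinear.Build F {poly F} 'rV[F]_q _ (weval w) (weval_is_linear w).

Lemma weval_enum_rank w p x : weval w p 0 (enum_rank x) = w x * p.[x].
Proof. by rewrite mxE enum_rankK. Qed.

Lemma card_roots_lt_size p : p != 0 -> (#|[set x | root p x]| < size p)%N.
Proof.
move=> p_nz; rewrite cardE max_poly_roots ?enum_uniq //.
by apply/allP => x; rewrite mem_enum inE.
Qed.

Lemma eq_poly_of_card_agree p g :
  (size (p - g)%R <= #|[set x | p.[x] == g.[x]]|)%N -> p = g.
Proof.
have -> : [set x | p.[x] == g.[x]] = [set x | root (p - g) x].
  by apply/setP => x; rewrite !inE rootE hornerD hornerN subr_eq0.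
move=> le_pg; apply/eqP; rewrite -subr_eq0; apply: contraTT le_pg.
by rewrite -ltnNge; apply: card_roots_lt_size.
Qed.

Lemma hwt_weval w p : (forall x, w x != 0) ->
  hwt (weval w p) = (q - #|[set x | root p x]|)%N.
Proof.
move=> w_neq0; rewrite -[X in (X - _)%N](cardsC [set x | root p x]) addKn.
have nz_i i : (weval w p 0 i != 0) = ~~ root p (enum_val i).
  by rewrite mxE mulf_eq0 negb_or w_neq0.
rewrite /hwt -(card_imset _ enum_val_inj); apply: eq_card => x; rewrite !inE.
apply/imsetP/idP => [[i] | p_x]; first by rewrite inE nz_i => ? ->.
by exists (enum_rank x); rewrite ?enum_rankK // inE nz_i enum_rankK.
Qed.

Lemma hwt_weval_gt w p : (forall x, w x != 0) -> p != 0 ->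
  (q < hwt (weval w p) + size p)%N.
Proof.
move=> w_neq0 p_nz; rewrite hwt_weval //.
have := card_roots_lt_size p_nz; have := max_card (mem [set x | root p x]); lia.
Qed.

Lemma weval_eq0 w p : (forall x, w x != 0) -> (size p <= q)%N ->
  (weval w p == 0) = (p == 0).
Proof.
move=> w_neq0 p_le; apply/eqP/eqP => [p_0 | ->]; last exact: linear0.
apply/eqP; apply: contraTT p_le => p_nz.
by have := hwt_weval_gt w_neq0 p_nz; rewrite p_0 hwt0 -ltnNge.
Qed.

Definition mono_code w s n : {vspace 'rV[F]_q} :=
  <<[tuple weval w 'X^(s + i) | i < n]>>%VS.

Lemma mono_code_gen_mem w s n (i : 'I_n) : weval w 'X^(s + i) \in mono_code w s n.
Proof. by apply/memv_span/mapP; exists i; rewrite ?mem_enum. Qed.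

Lemma weval_mem_mono_code w s n p : (size p <= s + n)%N ->
  (forall j, (j < s)%N -> p`_j = 0) -> weval w p \in mono_code w s n.
Proof.
move=> p_le p_low.
have -> : p = \poly_(i < s + n) p`_i.
  apply/polyP => j; rewrite coef_poly; case: ltnP => // /(leq_trans p_le).
  by move/leq_sizeP; apply.
rewrite poly_def big_split_ord /= big1 ?add0r => [|i _]; last by rewrite p_low ?scale0r.
by rewrite linear_sum memv_suml // => i _; rewrite linearZ memvZ ?mono_code_gen_mem.
Qed.

Lemma size_sum_Xn s n (c : 'I_n -> F) :
  (size (\sum_(i < n) c i *: 'X^(s + i))%R <= s + n)%N.
Proof.
apply: (leq_trans (size_sum _ _ _)); apply/bigmax_leqP => i _.
by rewrite (leq_trans (size_scale_leq _ _)) // size_polyXn -addnS leq_add2l.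
Qed.

Lemma coef_sum_Xn s n (c : 'I_n -> F) (j : 'I_n) :
  (\sum_(i < n) c i *: 'X^(s + i))`_(s + j) = c j.
Proof.
rewrite coef_sum (bigD1 j) //= coefZ coefXn eqxx mulr1 big1 ?addr0 // => i ij.
by rewrite coefZ coefXn eqn_add2l val_eqE eq_sym (negbTE ij) mulr0.
Qed.

Lemma mono_code_coord w s n v : v \in mono_code w s n ->
  exists c : 'I_n -> F, v = weval w (\sum_(i < n) c i *: 'X^(s + i)).
Proof.
move/coord_span => ->; eexists; rewrite linear_sum; apply: eq_bigr => i _.
by rewrite linearZ (nth_map i) ?size_enum_ord // nth_ord_enum.
Qed.

Lemma free_mono_code w s n : (forall x, w x != 0) -> (s + n <= q)%N ->
  free [tuple weval w 'X^(s + i) | i < n].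
Proof.
move=> w_neq0 sn_le; apply/freeP => c sum_0 i.
have p_0 : weval w (\sum_(i < n) c i *: 'X^(s + i)) = 0.
  rewrite -{}sum_0 linear_sum; apply: eq_bigr => j _.
  by rewrite linearZ (nth_map j) ?size_enum_ord // nth_ord_enum.
move/eqP: p_0; rewrite weval_eq0 ?(leq_trans (size_sum_Xn _ _)) // => /eqP.
by move/(congr1 (coefp (s + i))); rewrite /= coef_sum_Xn coef0.
Qed.

Lemma dim_mono_code w s n : (forall x, w x != 0) -> (s + n <= q)%N ->
  \dim (mono_code w s n) = n.
Proof. by move=> w_neq0 /(free_mono_code w_neq0) /eqP; rewrite size_tuple. Qed.

Definition grs w k := mono_code w 0 k.

Lemma grsP w k v :
  reflect (exists2 p : {poly F}, (size p <= k)%N & v = weval w p) (v \in grs w k).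
Proof.
apply: (iffP idP) => [/mono_code_coord [c ->] | [p p_le ->]].
  by exists (\sum_(i < k) c i *: 'X^(0 + i)) => //; rewrite -[k]/(0 + k)%N size_sum_Xn.
by apply: weval_mem_mono_code.
Qed.

Lemma min_dist_grs w l : (forall x, w x != 0) -> (l < q)%N ->
  min_dist (grs w l.+1) (q - l).
Proof.
move=> w_neq0 lt_lq; split.
  pose rs := take l (enum F).
  have size_rs : size rs = l by rewrite size_takel // -cardE ltnW.
  have uniq_rs : uniq rs by rewrite take_uniq ?enum_uniq.
  pose p := \prod_(a <- rs) ('X - a%:P).
  have roots_p : #|[set x | root p x]| = l.
    rewrite -size_rs -(card_uniqP uniq_rs); apply: eq_card => x.
    by rewrite inE -root_prod_XsubC.
  have hwt_p : hwt (weval w p) = (q - l)%N by rewrite hwt_weval ?roots_p.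
  exists (weval w p), 0; split; rewrite ?mem0v /hdist ?subr0 //.
    by apply/grsP; exists p; rewrite ?size_prod_XsubC ?size_rs.
  by apply: contraTneq lt_lq => p_0; move: hwt_p; rewrite p_0 hwt0; lia.
move=> x y x_C y_C x_neq_y.
have /grsP [p p_le xy_p] := memvB x_C y_C.
have p_nz : p != 0.
  by apply: contra_neq x_neq_y => p_0; apply/eqP; rewrite -subr_eq0 xy_p p_0 linear0.
by have := hwt_weval_gt w_neq0 p_nz; rewrite /hdist xy_p; lia.
Qed.

Lemma grs_is_code w l : (forall x, w x != 0) -> (l < q)%N ->
  is_code (grs w l.+1) l.+1 (q - l).
Proof. by move=> w_neq0 lt_lq; split; [apply: dim_mono_code | apply: min_dist_grs]. Qed.

Lemma grs_is_MDS w l : (forall x, w x != 0) -> (l < q)%N -> is_MDS (grs w l.+1).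
Proof.
move=> w_neq0 lt_lq; exists (q - l)%N; split; first exact: min_dist_grs.
by rewrite dim_mono_code //; lia.
Qed.

Section TwoWeights.
Variables (w w' : F -> F).
Hypothesis w_neq0 : forall x, w x != 0.
Hypotheses (w'_w : forall x : F, x != 0 -> w' x = w x) (w'_0 : w' 0 != w 0).

Lemma weval_root0 p : root p 0 -> weval w' p = weval w p.
Proof.
move/eqP=> p_0; apply/rowP => i; rewrite !mxE.
by have [-> | /w'_w ->] := eqVneq (enum_val i) 0; rewrite ?p_0 ?mulr0.
Qed.

Lemma weval_eq_root0 p g :
  weval w p = weval w' g -> (size (p - g)%R < q)%N -> p = g /\ root p 0.
Proof.
move=> eq_pg size_pg.
have eq_at x : w x * p.[x] = w' x * g.[x] by rewrite -!weval_enum_rank eq_pg.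
have p_g : p = g.
  apply: eq_poly_of_card_agree.
  have nz_agree : [set~ (0 : F)] \subset [set x | p.[x] == g.[x]].
    apply/subsetP => x; rewrite !inE => /w'_w w'x.
    by apply/eqP/(mulfI (w_neq0 x)); rewrite eq_at w'x.
  apply: leq_trans (subset_leq_card nz_agree); rewrite cardsC1 -ltnS prednK //.
  exact: leq_ltn_trans size_pg.
split=> //; move: (eq_at 0); rewrite -p_g => /eqP.
by rewrite -subr_eq0 -mulrBl mulf_eq0 subr_eq0 eq_sym (negbTE w'_0).
Qed.

Lemma capv_grs k : (k.+2 <= q)%N ->
  (grs w k.+1 :&: grs w' k.+1)%VS = mono_code w 1 k.
Proof.
move=> k_lt; apply/eqP; rewrite eqEsubv; apply/andP; split.
  apply/subvP => v; rewrite memv_cap.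
  case/andP=> /grsP [p p_le ->] /grsP [g g_le /weval_eq_root0] [|-> /eqP g_0].
      by rewrite (leq_ltn_trans (size_add _ _)) // size_opp gtn_max !(leq_trans _ k_lt).
  apply: weval_mem_mono_code => // j; rewrite ltnS leqn0 => /eqP ->.
  by rewrite -horner_coef0.
apply/span_subvP => _ /mapP [i _ ->]; rewrite memv_cap.
have Xi_le : (size ('X^(1 + i) : {poly F}) <= k.+1)%N by rewrite size_polyXn ltnS.
rewrite -{2}weval_root0; last by rewrite rootE hornerXn expr0n.
by apply/andP; split; apply/grsP; exists 'X^(1 + i).
Qed.

End TwoWeights.
End WeightedEvaluation.

Theorem theorem3 (F : finFieldType) (k1 k2 l : nat) :
  (3 <= #|F|)%N -> k1 = l.+1 -> k2 = l.+1 -> (l.+1 <= #|F| - 1)%N ->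
  exists C1 C2 : {vspace 'rV[F]_#|F|},
    [/\ l_intersection_pair C1 C2 l,
        is_MDS C1, is_MDS C2,
        is_code C1 k1 (#|F| - l) & is_code C2 k2 (#|F| - l)].
Proof.
move=> q_ge3 -> -> l_lt.
have [lam /andP [lam_neq0 lam_neq1]] := exists_neq2 (0 : F) 1 q_ge3.
pose w1 (x : F) : F := 1.
pose w2 (x : F) : F := if x == 0 then lam else 1.
have w1_neq0 x : w1 x != 0 := oner_neq0 F.
have w2_neq0 x : w2 x != 0 by rewrite /w2; case: ifP; rewrite ?oner_neq0.
have w2_w1 x : x != 0 -> w2 x = w1 x by rewrite /w2 => /negbTE ->.
have w2_0 : w2 0 != w1 0 by rewrite /w2 eqxx.
have lt_lq : (l < #|F|)%N by lia.
exists (grs w1 l.+1), (grs w2 l.+1); split.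
- by rewrite /l_intersection_pair capv_grs ?dim_mono_code //; lia.
- exact: grs_is_MDS.
- exact: grs_is_MDS.
- exact: grs_is_code.
- exact: grs_is_code.
Qed.
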